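(* For every odd $k\ge 13$, the set $AP_{3k,k}$ contains an ascending partition $\mathcal P$ with $\mathrm{slack}(\mathcal P)\ge 0$ that is non-equitable; and for every odd $k\ge 21$, the set $AP_{3k-1,k}$ contains an ascending partition $\mathcal P$ with $\mathrm{slack}(\mathcal P)\ge 0$ that is non-equitable.
   Context: $[n]=\{1,\ldots,n\}$ and $s^{n,k}=\frac{n(n+1)}{2k}$. An ascending partition of $n$ of size $k$ is a sequence of positive integers $[p_1,\ldots,p_k]$ with $p_1\le\cdots\le p_k$ and $\sum_i p_i=n$; $AP_{n,k}$ is the set of all such partitions when $s^{n,k}$ is an integer (and empty otherwise). $\mathcal P$ is equitable if $[n]$ can be partitioned into sets $A_1,\dots,A_k$ with $|A_i|=p_i$ all having the same element sum. For $j=1,\ldots,k$, $\mathrm{slack}_j(\mathcal P)=\sum_{i=1}^{p_1+\cdots+p_j}(n-i+1)-j\,s^{n,k}$, and $\mathrm{slack}(\mathcal P)=\min_{1\le j\le k-1}\mathrm{slack}_j(\mathcal P)$. *)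

From mathcomp Require Import all_boot all_order all_algebra.
Set Implicit Arguments. Unset Strict Implicit. Unset Printing Implicit Defensive.
Import Order.TTheory GRing.Theory Num.Theory.

(* A partition P = [p_1; ...; p_k] is represented by a seq nat; p_i = nth 0 P (i-1). *)

(* s^{n,k} = n(n+1)/(2k); only meaningful when 2k divides n(n+1). *)
Definition s_nk (n k : nat) : nat := (n * n.+1) %/ (2 * k).

Definition in_AP (n k : nat) (P : seq nat) : bool :=
  [&& (2 * k %| n * n.+1), size P == k, all (fun x => 0 < x) P,
      sorted leq P & sumn P == n].

Definition slack_j (n : nat) (P : seq nat) (j : nat) : int :=
  ((\sum_(1 <= i < (sumn (take j P)).+1) (n - i + 1)%N)%:Z
   - (j * s_nk n (size P))%:Z)%R.

(* slack(P) = min_{1 <= j <= k-1} slack_j(P) (k >= 2 assumed by callers). *)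
Definition slack (n : nat) (P : seq nat) : int :=
  \big[Order.min/slack_j n P 1]_(1 <= j < (size P)) slack_j n P j.

(* P is equitable: [n] = {1..n} splits into disjoint A_1..A_k with |A_i| = p_i
   and equal element sums.  Element x : 'I_n represents the integer x+1. *)
Definition equitable (n : nat) (P : seq nat) : Prop :=
  exists A : 'I_(size P) -> {set 'I_n},
    [/\ forall i j, i != j -> [disjoint A i & A j],
        \bigcup_(i < size P) A i = [set: 'I_n],
        forall i : 'I_(size P), #|A i| = nth 0 P i
      & forall i j : 'I_(size P),
          \sum_(x in A i) (x : nat).+1 = \sum_(x in A j) (x : nat).+1].

From mathcomp Require Import all_boot all_order all_algebra zify ring.
Import Order.TTheory GRing.Theory Num.Theory.

(* If P is equitable, every block has element sum s = n(n+1)/(2k). Call an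
   element of [n] large when it is at least s - n; there are n + 1 - (s - n) of
   them. Both elements of a block of size 2 are large, and a block of size 3
   contains a large element once 3(s - n) < s + 6, since three distinct values
   below s - n add up to at most 3(s - n) - 6. So P cannot be equitable when
   2 #{i | p_i = 2} + #{i | p_i = 3} exceeds n + 1 - (s - n).
   The witnesses are 2^a 3^b 6^x 7^y, in one linear family for each residue of
   k modulo 4 and each of n = 3k, 3k - 1, plus five small cases checked by
   computation.
   Along a run of equal parts, 2 slack_j is a concave quadratic in j, so
   slack >= 0 only has to be checked where the part size changes. *)

(* For t = p_1 + ... + p_j and s = s^{n,k} this is 2 slack_j(P) >= 0, as the
   t largest elements of [n] add up to (t (2n + 1) - t^2) / 2. *)
Definition prefix_slack_ge0 (n s j t : nat) : bool :=
  2 * j * s + t * t <= t * (2 * n + 1).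

Lemma double_sum_largest n L : L <= n ->
  2 * \sum_(1 <= i < L.+1) (n - i + 1) + L * L = L * (2 * n + 1).
Proof.
elim: L => [|L IH] leLn; first by rewrite big_geq.
rewrite big_nat_recr //= mulnDr.
have := IH (ltnW leLn); have -> : n - L.+1 + 1 = n - L by lia.
nia.
Qed.

Lemma sumn_take_leq j P : sumn (take j P) <= sumn P.
Proof. by rewrite -{2}(cat_take_drop j P) sumn_cat leq_addr. Qed.

Lemma slack_ge0 n P : 1 < size P -> sumn P <= n ->
  (forall j, 0 < j < size P ->
     prefix_slack_ge0 n (s_nk n (size P)) j (sumn (take j P))) ->
  (0 <= slack n P)%R.
Proof.
move=> P_gt1 sumP_le prefixP.
have slack_jP j : 0 < j < size P -> (0 <= slack_j n P j)%R.
  move=> j_range; rewrite /slack_j subr_ge0 lez_nat.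
  have sum_le : sumn (take j P) <= n by exact: leq_trans (sumn_take_leq j P) sumP_le.
  have := double_sum_largest _ _ sum_le; have := prefixP j j_range.
  rewrite /prefix_slack_ge0; nia.
rewrite /slack big_seq; apply: (big_ind (fun x : int => 0 <= x)%R).
- by apply: slack_jP; rewrite P_gt1.
- by move=> x y x_ge0 y_ge0; rewrite le_min x_ge0 y_ge0.
- by move=> j; rewrite mem_index_iota; exact: slack_jP.
Qed.

Lemma prefix_slack_concave n s j0 t0 c m d : d <= m ->
  prefix_slack_ge0 n s j0 t0 -> prefix_slack_ge0 n s (j0 + m) (t0 + c * m) ->
  prefix_slack_ge0 n s (j0 + d) (t0 + c * d).
Proof.
rewrite /prefix_slack_ge0 => d_le start_ge0 end_ge0.
have [e m_eq] : exists e, m = d + e by exists (m - d); rewrite subnKC.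
have [->|d_gt0] := posnP d; first by rewrite muln0 !addn0.
rewrite -(leq_pmul2l (_ : 0 < m)) ?m_eq ?addn_gt0 ?d_gt0 //.
rewrite m_eq in end_ge0.
set lhs := (d + e) * _.
apply: (@leq_trans (lhs + c * c * d * e * (d + e))); first exact: leq_addr.
have -> : lhs + c * c * d * e * (d + e) =
    e * (2 * j0 * s + t0 * t0) +
    d * (2 * (j0 + (d + e)) * s + (t0 + c * (d + e)) * (t0 + c * (d + e))).
  by rewrite /lhs; ring.
have -> : (d + e) * ((t0 + c * d) * (2 * n + 1)) =
  e * (t0 * (2 * n + 1)) + d * ((t0 + c * (d + e)) * (2 * n + 1)) by ring.
by rewrite leq_add // leq_mul2l ?start_ge0 ?end_ge0 orbT.
Qed.

Lemma prefix_slack_nseq_cat n s j0 t0 m c Q :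
  prefix_slack_ge0 n s j0 t0 ->
  (forall j, j <= size Q ->
     prefix_slack_ge0 n s (j0 + m + j) (t0 + c * m + sumn (take j Q))) ->
  forall j, j <= size (nseq m c ++ Q) ->
    prefix_slack_ge0 n s (j0 + j) (t0 + sumn (take j (nseq m c ++ Q))).
Proof.
move=> start_ge0 restQ j; rewrite size_cat size_nseq take_cat size_nseq.
case: ltnP => [j_lt _ | j_ge j_le].
- rewrite take_nseq ?(ltnW j_lt) // sumn_nseq.
  apply: prefix_slack_concave (ltnW j_lt) start_ge0 _.
  by have := restQ 0 (leq0n _); rewrite take0 !addn0.
- rewrite sumn_cat sumn_nseq addnA -[in j0 + j](subnKC j_ge) addnA.
  by apply: restQ; rewrite leq_subLR.
Qed.

Lemma double_sum_ord_succ n : 2 * \sum_(x < n) x.+1 = n * n.+1.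
Proof.
elim: n => [|n IH]; first by rewrite big_ord0.
by rewrite big_ord_recr /= mulnDr IH; ring.
Qed.

Lemma sum_ord_succ_ge_leq n h : \sum_(x < n) (h <= x.+1) <= n + 1 - h.
Proof.
elim: n => [|n IH]; first by rewrite big_ord0.
rewrite big_ord_recr; apply: leq_trans (leq_add IH (leqnn _)) _.
by rewrite /=; case: (leqP h n.+1) => /= h_n; lia.
Qed.

Lemma pair_all_ge n s (X : {set 'I_n}) : #|X| = 2 ->
  \sum_(x in X) (x : nat).+1 = s -> 2 <= \sum_(x in X) (s - n <= (x : nat).+1).
Proof.
move=> /eqP/cards2P [y [z [yz ->]]].
rewrite !big_setU1 ?inE //= !big_set1 => sum_yz.
have y_ge : s - n <= y.+1 by have := ltn_ord z; lia.
have z_ge : s - n <= z.+1 by have := ltn_ord y; lia.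
by rewrite y_ge z_ge.
Qed.

Lemma triple_has_ge n h (X : {set 'I_n}) : #|X| = 3 ->
  3 * h < \sum_(x in X) (x : nat).+1 + 6 -> 0 < \sum_(x in X) (h <= (x : nat).+1).
Proof.
move=> card3; have [x Xx] : exists x, x \in X by apply/card_gt0P; rewrite card3.
have /cards2P [y [z [yz Xx_eq]]] : #|X :\ x| == 2.
  by move: card3; rewrite (cardsD1 x) Xx add1n => -[->].
have x_yz : x \notin [set y; z] by rewrite -Xx_eq !inE eqxx.
have y_z : y \notin [set z] by rewrite inE.
rewrite -(setD1K Xx) Xx_eq !big_setU1 // !big_set1 /=.
move: x_yz yz; rewrite !inE negb_or -!(inj_eq val_inj) /= => /andP[xy xz] yz.
case: (leqP h x.+1) => // ?; case: (leqP h y.+1) => // ?; case: (leqP h z.+1) => //= ?.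
lia.
Qed.

Lemma sum_small_parts (P : seq nat) :
  \sum_(i < size P) ((nth 0 P i == 2) * 2 + (nth 0 P i == 3)) =
  2 * count_mem 2 P + count_mem 3 P.
Proof.
rewrite -(big_mkord xpredT (fun i => (nth 0 P i == 2) * 2 + (nth 0 P i == 3))).
rewrite -(big_nth 0 xpredT (fun p => (p == 2) * 2 + (p == 3))).
elim: P => [|p P IH]; first by rewrite big_nil.
by rewrite big_cons IH /=; lia.
Qed.

Lemma not_equitable_of_small_parts n P s : n * n.+1 = 2 * size P * s ->
  3 * (s - n) < s + 6 -> n + 1 - (s - n) < 2 * count_mem 2 P + count_mem 3 P ->
  ~ equitable n P.
Proof.
move=> sum_n triple_ok demand [A [disjA coverA cardA sumA]].
have partition_sum (f : 'I_n -> nat) :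
    \sum_(x < n) f x = \sum_(i < size P) \sum_(x in A i) f x.
  by rewrite -partition_disjoint_bigcup // coverA; apply: eq_bigl => x; rewrite inE.
have blockA i : \sum_(x in A i) (x : nat).+1 = s.
  have : \sum_(j < size P) \sum_(x in A j) (x : nat).+1 =
         size P * \sum_(x in A i) (x : nat).+1.
    rewrite -[in RHS](card_ord (size P)) -sum_nat_const.
    by apply: eq_bigr => j _; exact: sumA.
  rewrite -partition_sum => total.
  have k_gt0 : 0 < size P by exact: leq_ltn_trans (ltn_ord i).
  apply/eqP; rewrite -(eqn_pmul2l (_ : 0 < 2 * size P)) ?muln_gt0 ?k_gt0 //.
  by rewrite -mulnA -total double_sum_ord_succ sum_n.
have demandA (i : 'I_(size P)) :
    (nth 0 P i == 2) * 2 + (nth 0 P i == 3) <= \sum_(x in A i) (s - n <= (x : nat).+1).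
  rewrite -cardA; case cardAi: #|A i| => [|[|[|[|c]]]] //=.
  - exact: pair_all_ge cardAi (blockA i).
  - by apply: triple_has_ge cardAi _; rewrite blockA.
have := sum_ord_succ_ge_leq n (s - n); rewrite partition_sum.
have : 2 * count_mem 2 P + count_mem 3 P <=
       \sum_(i < size P) \sum_(x in A i) (s - n <= (x : nat).+1).
  by rewrite -sum_small_parts; apply: leq_sum => i _; exact: demandA.
lia.
Qed.

Definition slack_counterexample (n k : nat) : Prop :=
  exists P, in_AP n k P /\ (0 <= slack n P)%R /\ ~ equitable n P.

Lemma sorted_nseq_cat c m Q :
  sorted leq Q -> all (leq c) Q -> sorted leq (nseq m c ++ Q).
Proof.
move=> sortedQ geQ; elim: m => [|m IH] //=.
by rewrite (path_sortedE leq_trans) IH all_cat geQ all_nseq leqnn !orbT.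
Qed.

Lemma family_counterexample n k s a b x y :
  k = a + b + x + y -> n = 2 * a + 3 * b + 6 * x + 7 * y ->
  n * n.+1 = 2 * k * s -> 1 < k ->
  prefix_slack_ge0 n s a (2 * a) ->
  prefix_slack_ge0 n s (a + b) (2 * a + 3 * b) ->
  prefix_slack_ge0 n s (a + b + x) (2 * a + 3 * b + 6 * x) ->
  3 * (s - n) < s + 6 -> n + 1 - (s - n) < 2 * a + b ->
  slack_counterexample n k.
Proof.
move=> k_eq n_eq sum_n k_gt1 slack_a slack_ab slack_abx triple_ok demand.
set P := nseq a 2 ++ nseq b 3 ++ nseq x 6 ++ nseq y 7.
have sizeP : size P = k by rewrite !size_cat !size_nseq k_eq !addnA.
have sumnP : sumn P = n by rewrite !sumn_cat !sumn_nseq n_eq; lia.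
have s_eq : s_nk n k = s by rewrite /s_nk sum_n mulKn // muln_gt0 (ltnW k_gt1).
exists P; split; [|split].
- rewrite /in_AP sizeP sumnP sum_n dvdn_mulr // !eqxx /= !all_cat !all_nseq !orbT /=.
  rewrite andbT /P -[nseq y 7]cats0.
  by do 4 (apply: sorted_nseq_cat; last by rewrite ?all_cat ?all_nseq ?orbT).
- apply: slack_ge0; rewrite ?sizeP ?sumnP ?s_eq //.
  suff prefixP j : j <= size P -> prefix_slack_ge0 n s (0 + j) (0 + sumn (take j P)).
    by move=> j /andP[_ /ltnW]; rewrite -sizeP => /prefixP; rewrite !add0n.
  rewrite /P -[nseq y 7]cats0; move: j.
  apply: prefix_slack_nseq_cat; first by rewrite /prefix_slack_ge0 muln0.
  apply: prefix_slack_nseq_cat; first by rewrite add0n.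
  apply: prefix_slack_nseq_cat; first by rewrite !add0n.
  apply: prefix_slack_nseq_cat; first by rewrite !add0n.
  move=> j; rewrite leqn0 => /eqP ->; rewrite !addn0 -k_eq -n_eq /prefix_slack_ge0.
  by rewrite -sum_n; nia.
- apply: (not_equitable_of_small_parts _ _ s); rewrite ?sizeP //.
  by rewrite !count_cat !count_nseq /=; lia.
Qed.

Lemma counterexample_3k u :
  slack_counterexample (3 * (4 * u + 17)) (4 * u + 17) /\
  slack_counterexample (3 * (4 * u + 23)) (4 * u + 23).
Proof.
split; [
  apply: (family_counterexample _ _ (18 * u + 78) (3 * u + 12) 2 u 3) |
  apply: (family_counterexample _ _ (18 * u + 105) (3 * u + 16) 3 u 4)].
all: rewrite /prefix_slack_ge0; nia.
Qed.

Lemma counterexample_3k_sub1 u :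
  slack_counterexample (3 * (4 * u + 23) - 1) (4 * u + 23) /\
  slack_counterexample (3 * (4 * u + 29) - 1) (4 * u + 29).
Proof.
split; [
  apply: (family_counterexample _ _ (18 * u + 102) (3 * u + 17) 2 u 4) |
  apply: (family_counterexample _ _ (18 * u + 129) (3 * u + 21) 3 u 5)].
all: rewrite /prefix_slack_ge0; nia.
Qed.

Lemma counterexample_of_certificate n k P :
  [&& in_AP n k P, (0 <= slack n P)%R, 3 * (s_nk n k - n) < s_nk n k + 6
    & n + 1 - (s_nk n k - n) < 2 * count_mem 2 P + count_mem 3 P] ->
  slack_counterexample n k.
Proof.
case/and4P=> APP slackP triple_ok demand; exists P; do 2 split=> //.
case/and5P: (APP) => dvd_k /eqP sizeP _ _ _.
apply: (not_equitable_of_small_parts _ _ (s_nk n k)) => //.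
by rewrite sizeP /s_nk [RHS]mulnC divnK.
Qed.

Lemma sporadic_counterexamples :
  [/\ slack_counterexample (3 * 13) 13, slack_counterexample (3 * 15) 15,
      slack_counterexample (3 * 19) 19, slack_counterexample (3 * 21 - 1) 21
    & slack_counterexample (3 * 25 - 1) 25].
Proof.
split.
- apply: (@counterexample_of_certificate _ _ (nseq 9 2 ++ [:: 3; 3; 7; 8])).
  by rewrite /slack /slack_j unlock; vm_compute.
- apply: (@counterexample_of_certificate _ _ (nseq 10 2 ++ [:: 3; 3; 3; 8; 8])).
  by rewrite /slack /slack_j unlock; vm_compute.
- apply: (@counterexample_of_certificate _ _ (nseq 13 2 ++ [:: 3; 3; 3; 7; 7; 8])).
  by rewrite /slack /slack_j unlock; vm_compute.
- apply: (@counterexample_of_certificate _ _ (nseq 15 2 ++ [:: 3; 3; 3; 7; 8; 8])).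
  by rewrite /slack /slack_j unlock; vm_compute.
- apply: (@counterexample_of_certificate _ _ (nseq 18 2 ++ [:: 3; 3; 3; 7; 7; 7; 8])).
  by rewrite /slack /slack_j unlock; vm_compute.
Qed.

Theorem mainTheorem4 :
  (forall k : nat, odd k -> 13 <= k ->
     exists P : seq nat, in_AP (3 * k) k P /\ (0 <= slack (3 * k) P)%R
                         /\ ~ equitable (3 * k) P) /\
  (forall k : nat, odd k -> 21 <= k ->
     exists P : seq nat, in_AP (3 * k - 1) k P /\ (0 <= slack (3 * k - 1) P)%R
                         /\ ~ equitable (3 * k - 1) P).
Proof.
have [c13 c15 c19 c21 c25] := sporadic_counterexamples.
split=> k odd_k k_ge; have k_odd : k %% 2 = 1 by rewrite modn2 odd_k.
- have [->|[->|[->|[k_eq|k_eq]]]] : k = 13 \/ k = 15 \/ k = 19 \/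
    k = 4 * ((k - 17) %/ 4) + 17 \/ k = 4 * ((k - 23) %/ 4) + 23 by lia.
  1-3: by [].
  + by rewrite k_eq; case: (counterexample_3k ((k - 17) %/ 4)).
  + by rewrite k_eq; case: (counterexample_3k ((k - 23) %/ 4)).
- have [->|[->|[k_eq|k_eq]]] : k = 21 \/ k = 25 \/
    k = 4 * ((k - 23) %/ 4) + 23 \/ k = 4 * ((k - 29) %/ 4) + 29 by lia.
  1-2: by [].
  + by rewrite k_eq; case: (counterexample_3k_sub1 ((k - 23) %/ 4)).
  + by rewrite k_eq; case: (counterexample_3k_sub1 ((k - 29) %/ 4)).
Qed.
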